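(* Let $d\ge1$, $f$ a monic hyperbolic polynomial of degree $d$, $0\le s\le d$, and $u$ a composition of $d$ with $\ell(u)\le s$. Then $H_s^u(f)$ contains at most one polynomial.
   Context: Hyperbolic: all roots real. $f=t^d+f_1t^{d-1}+\dots+f_d$; $H_s(f)$ is the set of monic hyperbolic degree-$d$ polynomials $h=t^d+h_1t^{d-1}+\dots+h_d$ with $h_i=f_i$ for $1\le i\le s$. Compositions of $d$: tuples of positive integers summing to $d$, length $\ell(u)$; $v\le u$ iff $v$ arises from $u$ by merging consecutive parts. $v(h)$ is the tuple of multiplicities of the distinct roots of $h$ in increasing order; $H_s^u(f)=\{h\in H_s(f):v(h)\le u\}$. *)

From HB Require Import structures.
From mathcomp Require Import all_boot all_order all_algebra.
From mathcomp Require Import reals.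
Set Implicit Arguments. Unset Strict Implicit. Unset Printing Implicit Defensive.
Import Order.TTheory GRing.Theory Num.Theory.
Local Open Scope ring_scope.

(* A polynomial is hyperbolic if all its (complex) roots are real, i.e. it
   splits into linear factors over R (up to its leading coefficient). *)
Definition hyperbolic (R : realType) (p : {poly R}) : Prop :=
  exists rs : seq R, p = lead_coef p *: \prod_(r <- rs) ('X - r%:P).

(* Coefficient h_i of t^(d-i) in h = t^d + h_1 t^(d-1) + ... + h_d. *)
Definition hcoef (R : realType) (d : nat) (h : {poly R}) (i : nat) : R :=
  h`_(d - i).

Definition H_s (R : realType) (d s : nat) (f h : {poly R}) : Prop :=
  [/\ h \is monic, size h = d.+1, hyperbolic h &
      forall i, (1 <= i <= s)%N -> hcoef d h i = hcoef d f i].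

Definition composition (d : nat) (u : seq nat) : Prop :=
  all (fun k => 0 < k)%N u /\ sumn u = d.

(* v <= u : v arises from u by merging consecutive parts *)
Definition comp_le (v u : seq nat) : Prop :=
  exists w : seq nat, [/\ all (fun k => 0 < k)%N w, sumn w = size u &
                         v = map sumn (reshape w u)].

Definition mult_vec (R : realType) (h : {poly R}) (v : seq nat) : Prop :=
  exists r : seq R, [/\ sorted <%R r, (forall x, root h x = (x \in r)) &
                       v = [seq mup x h | x <- r]].

Definition H_su (R : realType) (d s : nat) (u : seq nat) (f h : {poly R}) : Prop :=
  H_s d s f h /\ exists v, mult_vec h v /\ comp_le v u.

From HB Require Import structures.
From mathcomp Require Import all_boot all_order all_algebra.
From mathcomp Require Import reals.
From mathcomp.real_closed Require Import polyrcf.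
From mathcomp.algebra_tactics Require Import ring lra.
From mathcomp Require Import zify.
Import Order.TTheory GRing.Theory Num.Theory.
Set Implicit Arguments. Unset Strict Implicit. Unset Printing Implicit Defensive.
Local Open Scope ring_scope.

(* Let h1, h2 lie in H_s^u(f) and let a, b be their roots, listed increasingly
   with multiplicity; both are constant on the blocks of u. Since h1 - h2 has
   degree at most d - s, the identity X^(s+1) P' = P T + O(X^d), where T
   encodes the power sums p_1, ..., p_s of the roots of P, shows that a and b
   have the same power sums up to order s, i.e. sum_i Q(a_i) = sum_i Q(b_i)
   for every Q of degree at most s. On the other hand the intervals between
   a_i and b_i move to the right as i grows, so there is a polynomial q of
   degree < l(u) <= s, with a root between any two consecutive blocks of
   opposite orientation, having the sign of b_i - a_i on each of them. For a
   primitive Q of q every difference Q(b_i) - Q(a_i) is then nonnegative, and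
   one is positive unless a = b. *)

Definition expand (T : Type) (u : seq nat) (s : seq T) : seq T :=
  flatten [seq nseq p.1 p.2 | p <- zip u s].

Section Expand.

Variable T : Type.
Implicit Types (u w : seq nat) (s : seq T).

Lemma expand_cons n u (x : T) s : expand (n :: u) (x :: s) = nseq n x ++ expand u s.
Proof. by []. Qed.

Lemma expand0s s : expand [::] s = [::].
Proof. by case: s. Qed.

Lemma expands0 u : expand u [::] = [::] :> seq T.
Proof. by case: u. Qed.

Lemma expand_cat u1 u2 s1 s2 : size u1 = size s1 ->
  expand (u1 ++ u2) (s1 ++ s2) = expand u1 s1 ++ expand u2 s2.
Proof. by move=> eq_sz; rewrite /expand zip_cat // map_cat flatten_cat. Qed.

Lemma expand_nseq u (x : T) : expand u (nseq (size u) x) = nseq (sumn u) x.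
Proof. by elim: u => //= n u IHu; rewrite expand_cons IHu nseqD. Qed.

Lemma size_expand u s : size u = size s -> size (expand u s) = sumn u.
Proof.
elim: u s => [|n u IHu] [|x s] //= [eq_sz].
by rewrite expand_cons size_cat size_nseq IHu.
Qed.

Lemma expand_expand w u s : sumn w = size u -> size w = size s ->
  expand u (expand w s) = expand (map sumn (reshape w u)) s.
Proof.
elim: w u s => [|n w IHw] u [|x s] //=; first by rewrite !expands0.
move=> sum_w [sz_w]; rewrite expand_cons.
have sz_take : size (take n u) = n by rewrite size_takel //; lia.
have -> : nseq n x = nseq (size (take n u)) x by rewrite sz_take.
rewrite -{1}(cat_take_drop n u) expand_cat ?size_nseq //.
by rewrite expand_nseq IHw // size_drop; lia.
Qed.

Lemma zip_expand (S : Type) u s (t : seq S) :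
  size s = size u -> size t = size u ->
  zip (expand u s) (expand u t) = expand u (zip s t).
Proof.
elim: u s t => [|n u IHu] [|x s] [|y t] //= [sz_s] [sz_t].
rewrite !expand_cons zip_cat ?size_nseq // IHu //.
by congr (_ ++ _); elim: n {IHu} => //= n ->.
Qed.

End Expand.

Section ExpandEqType.

Variable T : eqType.
Implicit Types (u : seq nat) (s : seq T).

Lemma mem_expand (x : T) u s : x \in expand u s -> x \in s.
Proof.
elim: u s => [|n u IHu] [|y s]; rewrite ?expand0s ?expands0 //.
by rewrite expand_cons mem_cat inE => /orP[/nseqP[-> _]|/IHu->]; rewrite ?eqxx ?orbT.
Qed.

Lemma pairwise_expand (e : rel T) u s :
  reflexive e -> pairwise e s -> pairwise e (expand u s).
Proof.
move=> e_refl; elim: u s => [|n u IHu] [|x s]; rewrite ?expand0s ?expands0 //=.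
move=> /andP[ex_s pw_s]; rewrite expand_cons pairwise_cat IHu // andbT.
have pw_nseq m : pairwise e (nseq m x).
  by elim: m => //= m ->; rewrite all_nseq e_refl orbT.
rewrite pw_nseq andbT; apply/allrelP => a b /nseqP[-> _] /mem_expand b_s.
exact: (allP ex_s).
Qed.

Lemma sorted_expand (e : rel T) u s : reflexive e -> transitive e ->
  sorted e s -> sorted e (expand u s).
Proof.
move=> e_refl e_tr; rewrite !sorted_pairwise //; exact: pairwise_expand.
Qed.

Lemma count_expand (F : T -> nat) s x : uniq s ->
  count_mem x (expand (map F s) s) = if x \in s then F x else 0%N.
Proof.
elim: s => //= y s IHs /andP[y_s uniq_s].
rewrite expand_cons count_cat count_nseq IHs // inE.
have [->|neq_xy] := eqVneq x y; first by rewrite (negbTE y_s) /= eqxx mul1n addn0.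
by rewrite /= eq_sym (negbTE neq_xy) mul0n.
Qed.

Lemma has_zip_neq s t : size s = size t -> s != t ->
  has (fun p => p.1 != p.2) (zip s t).
Proof.
elim: s t => [|x s IHs] [|y t] //= [sz_st].
by rewrite eqseq_cons negb_and => /orP[->//|/IHs->]; rewrite ?orbT.
Qed.

End ExpandEqType.

Definition poly_of_roots (R : nzRingType) (rs : seq R) : {poly R} :=
  \prod_(r <- rs) ('X - r%:P).

Definition geom_poly (R : nzRingType) (n : nat) (r : R) : {poly R} :=
  \poly_(i < n.+1) r ^+ (n - i).

Definition psum_poly (R : nzRingType) (n : nat) (rs : seq R) : {poly R} :=
  \sum_(r <- rs) geom_poly n r.

Section PowerSums.

Variable R : idomainType.
Implicit Types (r : R) (rs : seq R) (p : {poly R}).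

Lemma size_poly_of_roots rs : size (poly_of_roots rs) = (size rs).+1.
Proof. exact: size_prod_XsubC. Qed.

Lemma poly_of_roots_cons r rs :
  poly_of_roots (r :: rs) = ('X - r%:P) * poly_of_roots rs.
Proof. exact: big_cons. Qed.

Lemma psum_poly_cons n r rs : psum_poly n (r :: rs) = geom_poly n r + psum_poly n rs.
Proof. exact: big_cons. Qed.

Lemma mul_XsubC_geom_poly n r :
  ('X - r%:P) * geom_poly n r = 'X^(n.+1) - (r ^+ n.+1)%:P.
Proof.
apply/polyP => i; rewrite mulrBl coefB coefXM coefCM coefB coefXn coefC !coef_poly.
case: i => [|i] /=; first by rewrite subn0 -exprS.
rewrite eqSS ltnS subr0 ltnS.
have [lt_in|gt_in|->] := ltngtP i n.
- by rewrite -(subnSK lt_in) exprS subrr.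
- by rewrite mulr0 subrr.
- by rewrite subnn expr0 ?ltnn mulr0 subr0.
Qed.

Lemma size_psum_poly n rs : (size (psum_poly n rs) <= n.+1)%N.
Proof.
rewrite (leq_trans (size_sum _ _ _)) //; apply/bigmax_leqP_seq => r _ _; exact: size_poly.
Qed.

Lemma coef_psum_poly n k rs :
  (k <= n)%N -> (psum_poly n rs)`_(n - k) = \sum_(r <- rs) r ^+ k.
Proof.
move=> le_kn; rewrite coef_sum; apply: eq_bigr => r _.
by rewrite coef_poly ltnS leq_subr subKn.
Qed.

(* For [P = poly_of_roots rs] the Laurent expansion of [P'/P] at infinity is
   [sum_k p_k X^(-k-1)], so [psum_poly n rs] is the polynomial part of
   [X^(n+1) P'/P]. *)
Lemma size_logder_defect n rs :
  (size ('X^(n.+1) * (poly_of_roots rs)^`() - poly_of_roots rs * psum_poly n rs)%R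
    <= size rs)%N.
Proof.
elim: rs => [|r rs IHrs].
  by rewrite /poly_of_roots /psum_poly !big_nil derivC !mulr0 subrr size_poly0.
rewrite poly_of_roots_cons psum_poly_cons derivM derivXsubC mul1r.
set P := poly_of_roots rs in IHrs *; set T := psum_poly n rs in IHrs *.
have -> : 'X^(n.+1) * (P + ('X - r%:P) * P^`()) - ('X - r%:P) * P * (geom_poly n r + T)
    = ('X - r%:P) * ('X^(n.+1) * P^`() - P * T) + (r ^+ n.+1)%:P * P.
  transitivity ('X^(n.+1) * P + ('X - r%:P) * ('X^(n.+1) * P^`() - P * T)
                - P * (('X - r%:P) * geom_poly n r)); first by ring.
  by rewrite mul_XsubC_geom_poly; ring.
rewrite (leq_trans (size_polyD _ _)) // geq_max; apply/andP; split.
  by rewrite (leq_trans (size_polyMleq _ _)) // size_XsubC add2n /= ltnS.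
rewrite (leq_trans (size_polyMleq _ _)) // size_poly_of_roots size_polyC.
by case: (_ != 0).
Qed.

Lemma psum_poly_eq_of_size_sub d s rs1 rs2 :
  size rs1 = d -> size rs2 = d -> (s <= d)%N ->
  (size (poly_of_roots rs1 - poly_of_roots rs2)%R <= d - s)%N ->
  psum_poly s rs1 = psum_poly s rs2.
Proof.
move=> sz1 sz2 le_sd sz_E.
set P1 := poly_of_roots rs1; set P2 := poly_of_roots rs2; set E := P1 - P2 in sz_E.
set T1 := psum_poly s rs1; set T2 := psum_poly s rs2.
have defect_eq : P2 * (T1 - T2) = 'X^(s.+1) * E^`() - E * T1 -
    (('X^(s.+1) * P1^`() - P1 * T1) - ('X^(s.+1) * P2^`() - P2 * T2)).
  by rewrite /E derivB; ring.
have sz_XE : (size ('X^(s.+1) * E^`())%R <= d)%N.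
  have [->|E'0] := eqVneq E^`() 0; first by rewrite mulr0 size_poly0.
  have E0 : E != 0 by apply: contra E'0 => /eqP->; rewrite derivC.
  rewrite size_mul ?E'0 ?monic_neq0 ?monicXn // size_polyXn.
  rewrite addSn /=; have := lt_size_deriv E0; move: sz_E.
  by set a := size E; set b := size E^`(); lia.
have sz_ET : (size (E * T1)%R <= d)%N.
  rewrite (leq_trans (size_polyMleq _ _)) //; have := size_psum_poly s rs1.
  by move: sz_E; set a := size E; set b := size T1; lia.
have sz_P2T : (size (P2 * (T1 - T2))%R <= d)%N.
  rewrite defect_eq; apply: (leq_trans (size_polyD _ _)).
  rewrite geq_max size_polyN; apply/andP; split.
    by apply: (leq_trans (size_polyD _ _)); rewrite geq_max size_polyN sz_XE sz_ET.
  apply: (leq_trans (size_polyD _ _)); rewrite geq_max size_polyN.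
  by rewrite -{1}sz1 -sz2 !size_logder_defect.
(* [P2] is monic of size [d + 1], so a nonzero multiple has size above [d]. *)
apply/eqP; rewrite -subr_eq0; apply: contraTT sz_P2T => T0.
have P2_0 : P2 != 0 by rewrite -size_poly_eq0 size_poly_of_roots.
rewrite size_mul // size_poly_of_roots sz2 addSn /= -ltnNge.
by rewrite -[X in (X < _)%N]addn0 ltn_add2l lt0n size_poly_eq0.
Qed.

Lemma sum_horner_eq_of_psum_poly_eq s rs1 rs2 p :
  psum_poly s rs1 = psum_poly s rs2 -> (size p <= s.+1)%N ->
  \sum_(r <- rs1) p.[r] = \sum_(r <- rs2) p.[r].
Proof.
move=> eq_T sz_p.
have sum_hornerE rs : \sum_(r <- rs) p.[r] =
    \sum_(i < size p) p`_i * \sum_(r <- rs) r ^+ i.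
  under eq_bigr do rewrite horner_coef.
  by rewrite exchange_big /=; apply: eq_bigr => i _; rewrite mulr_sumr.
rewrite !sum_hornerE; apply: eq_bigr => i _.
have le_is : (i <= s)%N by rewrite -ltnS (leq_trans (ltn_ord i)).
by rewrite -!(coef_psum_poly _ le_is) eq_T.
Qed.

End PowerSums.

Definition between (R : numDomainType) (x a b : R) : bool :=
  (a <= x <= b) || (b <= x <= a).

Definition le_pair (R : numDomainType) : rel (R * R) :=
  fun p q => (p.1 <= q.1) && (p.2 <= q.2).

Definition sign_adapted (R : numDomainType) (q : {poly R}) (ps : seq (R * R)) :=
  forall p, p \in ps -> forall x, between x p.1 p.2 -> 0 <= q.[x] * (p.2 - p.1).

Section SignAdapted.

Variable R : realDomainType.
Implicit Types (a b x : R) (q : {poly R}) (ps : seq (R * R)).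

Lemma between_le_max x a b : between x a b -> x <= Num.max a b.
Proof. by rewrite le_max => /orP[] /andP[_ ->]; rewrite ?orbT. Qed.

Lemma between_ge_min x a b : between x a b -> Num.min a b <= x.
Proof. by rewrite ge_min => /orP[] /andP[-> _]; rewrite ?orbT. Qed.

Lemma pairwise_le_pair_zip (s t : seq R) :
  sorted <=%R s -> sorted <=%R t -> pairwise (@le_pair R) (zip s t).
Proof.
rewrite !(sorted_pairwise le_trans); elim: s t => [|x s IHs] [|y t] //=.
move=> /andP[le_xs pw_s] /andP[le_yt pw_t]; rewrite IHs // andbT.
elim: s t le_xs le_yt {IHs pw_s pw_t} => [|x' s IHs] [|y' t] //=.
by move=> /andP[le_x le_xs] /andP[le_y le_yt]; rewrite {1}/le_pair le_x le_y IHs.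
Qed.

Lemma mul_sign_trans (a b c : R) : 0 <= a * b -> 0 < b * c -> 0 <= a * c.
Proof. by move=> *; nra. Qed.

Lemma max_le_min_opposite (y1 z1 y2 z2 : R) :
  y1 <= y2 -> z1 <= z2 -> (z1 - y1) * (z2 - y2) < 0 ->
  Num.max y1 z1 <= Num.min y2 z2.
Proof.
move=> le_y le_z opp; rewrite ge_max !le_min.
by apply/andP; split; apply/andP; split; nra.
Qed.

Lemma sign_adapted_sub q ps ps' :
  (forall p, p \in ps' -> p.1 != p.2 -> p \in ps) ->
  sign_adapted q ps -> sign_adapted q ps'.
Proof.
move=> sub_ps adapted p p_ps' x btw_x.
have [->|neq_p] := eqVneq p.1 p.2; first by rewrite subrr mulr0.
exact: adapted (sub_ps p p_ps' neq_p) x btw_x.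
Qed.

(* Consecutive pairs of opposite orientation are separated, so one new root at
   the left end of the second pair fixes the sign pattern. *)
Lemma sign_adapted_cons_opposite q (y1 z1 y2 z2 : R) ps :
  y1 <= y2 -> z1 <= z2 -> (z1 - y1) * (z2 - y2) < 0 ->
  all (@le_pair R (y2, z2)) ps -> sign_adapted q ((y2, z2) :: ps) ->
  (forall x, x <= Num.max y2 z2 -> 0 <= q.[x] * (z2 - y2)) ->
  sign_adapted (q * ('X - (Num.min y2 z2)%:P)) [:: (y1, z1), (y2, z2) & ps] /\
  forall x, x <= Num.max y1 z1 ->
    0 <= (q * ('X - (Num.min y2 z2)%:P)).[x] * (z1 - y1).
Proof.
move=> le_y le_z opp le_2ps adapted left_q.
have le_max_min := max_le_min_opposite le_y le_z opp.
have le_max12 : Num.max y1 z1 <= Num.max y2 z2.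
  by rewrite ge_max !le_max le_y le_z orbT.
have left_q' x : x <= Num.max y1 z1 ->
    0 <= (q * ('X - (Num.min y2 z2)%:P)).[x] * (z1 - y1).
  move=> le_x; rewrite hornerM hornerXsubC mulrAC; apply: mulr_le0.
    rewrite -oppr_ge0 -mulrN; apply: mul_sign_trans (left_q x _) _.
      exact: le_trans le_x le_max12.
    by rewrite mulrN oppr_gt0 mulrC.
  by rewrite subr_le0 (le_trans le_x).
split=> // p; rewrite inE => /orP[/eqP-> x /between_le_max|p_2ps x btw_x].
  exact: left_q'.
have le_cx : Num.min y2 z2 <= x.
  apply: le_trans (between_ge_min btw_x); rewrite le_min !ge_min.
  move: p_2ps; rewrite inE => /orP[/eqP->|/(allP le_2ps)/andP[le1 le2]].
    by rewrite !lexx orbT.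
  by rewrite le1 le2 orbT.
rewrite hornerM hornerXsubC mulrAC mulr_ge0 ?subr_ge0 //.
exact: adapted p_2ps x btw_x.
Qed.

(* The extra conclusion says that [q] already has the sign of the head pair on
   the whole half-line to its left, which is where the next factor goes. *)
Lemma exists_sign_adapted_head (y1 z1 : R) ps :
  y1 != z1 -> pairwise (@le_pair R) ((y1, z1) :: ps) ->
  exists q, [/\ q != 0, (size q <= (size ps).+1)%N,
    sign_adapted q ((y1, z1) :: ps) &
    forall x, x <= Num.max y1 z1 -> 0 <= q.[x] * (z1 - y1)].
Proof.
elim: ps y1 z1 => [|[y2 z2] ps IHps] y1 z1 neq_yz1.
  move=> _; exists (z1 - y1)%:P; split.
  - by rewrite polyC_eq0 subr_eq0 eq_sym.
  - by rewrite size_polyC leq_b1.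
  - by move=> p; rewrite mem_seq1 => /eqP-> x _ /=; rewrite hornerC; nra.
  - by move=> x _; rewrite hornerC; nra.
rewrite /= -!andbA => /and5P[le_y le_z le_1ps le_2ps pw_ps].
have [eq_yz2|neq_yz2] := eqVneq y2 z2.
  have [|q [q0 sz_q adapted left_q]] := IHps y1 z1 neq_yz1; first exact/andP.
  exists q; split=> //; first exact: leqW.
  apply: sign_adapted_sub adapted => p; rewrite !inE eq_yz2.
  by case: eqP => [->|_] //= /orP[/eqP->|//]; rewrite eqxx.
have [|q [q0 sz_q adapted left_q]] := IHps y2 z2 neq_yz2; first exact/andP.
have [same|opp] := ltrP 0 ((z1 - y1) * (z2 - y2)).
  have le_max12 : Num.max y1 z1 <= Num.max y2 z2.
    by rewrite ge_max !le_max le_y le_z orbT.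
  have left_q1 x : x <= Num.max y1 z1 -> 0 <= q.[x] * (z1 - y1).
    move=> le_x; apply: mul_sign_trans (left_q x (le_trans le_x le_max12)) _.
    by rewrite mulrC.
  exists q; split=> //; first exact: leqW.
  move=> p; rewrite inE => /orP[/eqP-> x /between_le_max|]; first exact: left_q1.
  exact: adapted.
have {}opp : (z1 - y1) * (z2 - y2) < 0.
  by rewrite lt_def opp andbT eq_sym mulf_eq0 !subr_eq0 negb_or eq_sym neq_yz1 eq_sym.
have [adapted' left_q'] := sign_adapted_cons_opposite le_y le_z opp le_2ps adapted left_q.
exists (q * ('X - (Num.min y2 z2)%:P)); split=> //.
  by rewrite mulf_neq0 // polyXsubC_eq0.
by rewrite size_mul ?polyXsubC_eq0 // size_XsubC addn2 /= ltnS.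
Qed.

Lemma exists_sign_adapted ps :
  pairwise (@le_pair R) ps -> has (fun p => p.1 != p.2) ps ->
  exists q, [/\ q != 0, (size q <= size ps)%N & sign_adapted q ps].
Proof.
elim: ps => [|[y z] ps IHps] // pw nondeg.
have pw_ps : pairwise (@le_pair R) ps by case/andP: pw.
have [eq_yz|neq_yz] := eqVneq y z; last first.
  by have [q [q0 sz_q adapted _]] := exists_sign_adapted_head neq_yz pw; exists q.
rewrite /= eq_yz eqxx /= in nondeg.
have [q [q0 sz_q adapted]] := IHps pw_ps nondeg.
exists q; split=> //; first exact: leqW.
apply: sign_adapted_sub adapted => p.
by rewrite inE eq_yz => /orP[/eqP->|]; rewrite ?eqxx.
Qed.

End SignAdapted.

Definition antideriv (R : numFieldType) (q : {poly R}) : {poly R} :=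
  \poly_(i < (size q).+1) (if i is j.+1 then q`_j / i%:R else 0).

Lemma antiderivK (R : numFieldType) (q : {poly R}) : (antideriv q)^`() = q.
Proof.
apply/polyP => i; rewrite coef_deriv coef_poly ltnS.
case: ltnP => [_|le_qi] /=; first by rewrite -(mulr_natr (_ / _)) divfK ?pnatr_eq0.
by rewrite mul0rn nth_default.
Qed.

Lemma size_antideriv (R : numFieldType) (q : {poly R}) :
  (size (antideriv q) <= (size q).+1)%N.
Proof. exact: size_poly. Qed.

Section RealClosed.

Variable R : rcfType.
Implicit Types (a b : R) (Q : {poly R}) (ps : seq (R * R)).

Lemma poly_eq0_on_itv (P : {poly R}) a b :
  a < b -> {in `[a, b], forall x, P.[x] = 0} -> P = 0.
Proof.
move=> lt_ab P_itv; apply/eqP; apply: contraT => P0.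
pose x i := a + (b - a) / i.+1%:R.
suff : (size (mkseq x (size P)) < size P)%N by rewrite size_mkseq ltnn.
apply: max_poly_roots P0 _ _.
  apply/allP => _ /mapP[i _ ->]; apply/eqP/P_itv.
  have le_step : (b - a) / i.+1%:R <= b - a.
    by rewrite ler_pdivrMr ?ltr0n // ler_peMr ?ler1n ?subr_ge0 ?ltW.
  have ge0_step : 0 <= (b - a) / i.+1%:R by rewrite divr_ge0 ?subr_ge0 ?ltW.
  rewrite in_itv /= /x; move: le_step ge0_step; set t := _ / _.
  by move=> *; apply/andP; split; lra.
apply: mkseq_uniq => i j; rewrite /x => /addrI /mulfI.
rewrite subr_eq0 gt_eqF // => /(_ isT) /invr_inj /eqP; rewrite eqr_nat.
by move=> /eqP[].
Qed.

Lemma horner_lt_deriv_ge0 Q a b :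
  a < b -> Q^`() != 0 -> {in `[a, b], forall x, 0 <= Q^`().[x]} -> Q.[a] < Q.[b].
Proof.
move=> lt_ab Q'0 Q'_ge0.
have a_itv : a \in `[a, b] by rewrite in_itv /= lexx ltW.
have b_itv : b \in `[a, b] by rewrite in_itv /= lexx ltW.
have mono : {in `[a, b] &, {homo horner Q : x y / x <= y}}.
  apply: ler_hornerW => x x_itv; apply/Q'_ge0/(subitvP _ x_itv).
  by rewrite subitvE !bnd_simp.
rewrite lt_neqAle mono ?ltW // andbT; apply: contra Q'0 => /eqP eq_Qab.
have : Q - Q.[a]%:P = 0.
  apply: (poly_eq0_on_itv lt_ab) => x x_itv; rewrite !hornerE.
  have := mono _ _ a_itv x_itv; have := mono _ _ x_itv b_itv.
  by move: x_itv; rewrite in_itv /= => /andP[le_ax le_xb] /(_ le_xb) + /(_ le_ax); lra.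
by move/eqP; rewrite subr_eq0 => /eqP->; rewrite derivC.
Qed.

Lemma horner_lt_sign_adapted Q a b :
  a != b -> Q^`() != 0 -> (forall x, between x a b -> 0 <= Q^`().[x] * (b - a)) ->
  Q.[a] < Q.[b].
Proof.
move=> neq_ab Q'0 adapted.
have [lt_ab|lt_ba|eq_ab] := ltgtP a b; last by rewrite eq_ab eqxx in neq_ab.
  apply: horner_lt_deriv_ge0 => // x; rewrite in_itv /= => x_ab.
  by have := adapted x; rewrite /between x_ab => /(_ isT); nra.
rewrite -ltrN2 -!hornerN; apply: horner_lt_deriv_ge0; rewrite ?derivN ?oppr_eq0 //.
move=> x; rewrite in_itv /= hornerN => x_ba.
by have := adapted x; rewrite /between x_ba orbT => /(_ isT); nra.
Qed.

Lemma sum_horner_lt Q ps :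
  Q^`() != 0 -> sign_adapted Q^`() ps -> has (fun p => p.1 != p.2) ps ->
  \sum_(p <- ps) Q.[p.1] < \sum_(p <- ps) Q.[p.2].
Proof.
move=> Q'0 adapted nondeg.
have lt_p p : p \in ps -> p.1 != p.2 -> Q.[p.1] < Q.[p.2].
  by move=> p_ps neq_p; apply: horner_lt_sign_adapted neq_p Q'0 _; apply: adapted.
have le_p p : p \in ps -> 0 <= Q.[p.2] - Q.[p.1].
  by move=> p_ps; rewrite subr_ge0; have [->|/(lt_p p p_ps)/ltW] := eqVneq p.1 p.2.
rewrite -subr_gt0 -sumrB big_seq lt_def psumr_neq0; last by move=> p /le_p.
rewrite sumr_ge0 ?andbT; last by move=> p /le_p.
have [p p_ps neq_p] := hasP nondeg; apply/hasP; exists p => //.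
by rewrite p_ps subr_gt0 lt_p.
Qed.

End RealClosed.

Lemma expand_eq_of_moments (R : rcfType) (u : seq nat) (y z : seq R) :
  size y = size u -> size z = size u -> sorted <=%R y -> sorted <=%R z ->
  (forall Q : {poly R}, (size Q <= (size u).+1)%N ->
     \sum_(r <- expand u y) Q.[r] = \sum_(r <- expand u z) Q.[r]) ->
  expand u y = expand u z.
Proof.
move=> sz_y sz_z sorted_y sorted_z moments; apply/eqP/contraT => neq_yz.
have sz_exp : size (expand u y) = size (expand u z) by rewrite !size_expand.
set ps := zip (expand u y) (expand u z).
have ps_exp : ps = expand u (zip y z) by apply: zip_expand.
have nondeg : has (fun p => p.1 != p.2) ps by apply: has_zip_neq.
have nondeg_yz : has (fun p => p.1 != p.2) (zip y z).
  have [p p_ps neq_p] := hasP nondeg; apply/hasP; exists p => //.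
  by move: p_ps; rewrite ps_exp => /mem_expand.
have [q [q0 sz_q adapted]] :=
  exists_sign_adapted (pairwise_le_pair_zip sorted_y sorted_z) nondeg_yz.
set Q := antideriv q.
have adapted_ps : sign_adapted Q^`() ps.
  rewrite antiderivK; apply: sign_adapted_sub adapted => p.
  by rewrite ps_exp => /mem_expand.
have Q'0 : Q^`() != 0 by rewrite antiderivK.
have := sum_horner_lt Q'0 adapted_ps nondeg.
have sum_fst : \sum_(p <- ps) Q.[p.1] = \sum_(r <- expand u y) Q.[r].
  by rewrite -[in RHS](@unzip1_zip _ _ (expand u y) (expand u z)) ?sz_exp // big_map.
have sum_snd : \sum_(p <- ps) Q.[p.2] = \sum_(r <- expand u z) Q.[r].
  by rewrite -[in RHS](@unzip2_zip _ _ (expand u y) (expand u z)) ?sz_exp // big_map.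
rewrite sum_fst sum_snd moments ?ltxx //.
rewrite (leq_trans (size_antideriv q)) // ltnS (leq_trans sz_q) //.
by rewrite size1_zip ?sz_y ?sz_z.
Qed.

Lemma poly_of_roots_expand_mup (F : fieldType) (rs r : seq F) :
  uniq r -> (forall x, root (poly_of_roots rs) x = (x \in r)) ->
  poly_of_roots rs = poly_of_roots (expand [seq mup x (poly_of_roots rs) | x <- r] r).
Proof.
move=> uniq_r roots_r; apply: perm_big; apply/allP => x _; apply/eqP.
rewrite count_expand //; case: ifP => [_|x_r]; first by rewrite mu_prod_XsubC.
by apply/count_memPn; rewrite -root_prod_XsubC -/(poly_of_roots rs) roots_r x_r.
Qed.

Section RealRoots.

Variable R : realType.
Implicit Types (f h : {poly R}) (u : seq nat).

Lemma H_su_poly_of_roots d s u f h : H_su d s u f h ->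
  exists y : seq R, [/\ size y = size u, sorted <=%R y & h = poly_of_roots (expand u y)].
Proof.
case=> [[monic_h _ [rs def_h] _] [v [[r [sorted_r roots_r def_v]] [w [_ sum_w def_vw]]]]].
rewrite (monicP monic_h) scale1r -/(poly_of_roots rs) in def_h.
move: sorted_r; rewrite lt_sorted_uniq_le => /andP[uniq_r le_sorted_r].
have sz_w : size w = size r.
  by rewrite -(size_reshape w u) -(size_map sumn) -def_vw def_v size_map.
exists (expand w r); split; first by rewrite size_expand.
  exact: sorted_expand le_trans le_sorted_r.
rewrite expand_expand // -def_vw def_v def_h.
by apply: poly_of_roots_expand_mup; rewrite // -def_h.
Qed.

Lemma size_sub_H_s d s f h1 h2 :
  (s <= d)%N -> H_s d s f h1 -> H_s d s f h2 -> (size (h1 - h2)%R <= d - s)%N.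
Proof.
move=> le_sd [monic1 sz1 _ coef1] [monic2 sz2 _ coef2].
apply/leq_sizeP => j le_j; rewrite coefB; apply/eqP; rewrite subr_eq0; apply/eqP.
have [lt_jd|lt_dj|->] := ltngtP j d.
- have j_range : (1 <= d - j <= s)%N by apply/andP; split; lia.
  have := coef1 _ j_range; have := coef2 _ j_range.
  by rewrite /hcoef subKn ?(ltnW lt_jd) // => -> ->.
- by rewrite !nth_default ?sz1 ?sz2.
- by have := monicP monic1; have := monicP monic2; rewrite !lead_coefE sz1 sz2 => -> ->.
Qed.

End RealRoots.

Theorem mainTheorem5 (R : realType) (d : nat) (f : {poly R}) (s : nat)
    (u : seq nat) :
  (1 <= d)%N -> f \is monic -> size f = d.+1 -> hyperbolic f ->
  (s <= d)%N -> composition d u -> (size u <= s)%N ->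
  forall h1 h2 : {poly R}, H_su d s u f h1 -> H_su d s u f h2 -> h1 = h2.
Proof.
move=> _ _ _ _ le_sd [_ sum_u] le_us h1 h2 H1 H2.
have sz_sub := size_sub_H_s le_sd H1.1 H2.1.
have [y [sz_y sorted_y def_h1]] := H_su_poly_of_roots H1.
have [z [sz_z sorted_z def_h2]] := H_su_poly_of_roots H2.
rewrite def_h1 def_h2 in sz_sub *; congr poly_of_roots.
have sz_exp (t : seq R) : size t = size u -> size (expand u t) = d.
  by move=> sz_t; rewrite size_expand.
have := psum_poly_eq_of_size_sub (sz_exp y sz_y) (sz_exp z sz_z) le_sd sz_sub.
move=> eq_psum; apply: expand_eq_of_moments => // Q sz_Q.
by apply: sum_horner_eq_of_psum_poly_eq eq_psum _; rewrite (leq_trans sz_Q).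
Qed.
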